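(* Let $p$ be a prime and $b$ an integer with $\frac{p-1}{2}<b<p$ and $(p-b)(p-b^{-1})=2p+1$. Set $\alpha=\frac{p-b^{-1}+1}{2}$ and $\beta=\frac{p-b+1}{2}$. Then $|\mathrm{inv}_{1,b}|=5$, so $R=\mathbb{C}[y_0,\dots,y_4]$, and $$\ker\varphi_{1,b}=\langle y_2^2-y_1y_3,\ y_1^{\alpha-1}y_2-y_0y_3,\ y_3^{\beta}-y_2y_4,\ y_1^{\alpha}-y_0y_2,\ y_2y_3^{\beta-1}-y_1y_4,\ y_1^{\alpha-1}y_3^{\beta-1}-y_0y_4\rangle.$$
   Context: Let $S=\mathbb{C}[x_1,x_2]$ (standard grading), $\zeta=e^{2\pi i/p}$, $G=\mathbb{Z}/p\mathbb{Z}=\langle\zeta\rangle$ acting on $S$ by $x_1\mapsto\zeta x_1$, $x_2\mapsto\zeta^bx_2$, with invariant ring $S^G_{1,b}$ (spanned by monomials $x_1^cx_2^d$ with $c+bd\equiv0\pmod p$). $\mathrm{inv}_{1,b}$ denotes the minimal set of monomial generators of $S^G_{1,b}$ as a $\mathbb{C}$-algebra: the nonconstant invariant monomials that are not a product of two nonconstant invariant monomials. Writing $\mathrm{inv}_{1,b}=\{z_0,\dots,z_n\}$ in lexicographic order with $x_1>x_2$ (decreasing exponent of $x_1$), $R=\mathbb{C}[y_0,\dots,y_n]$ with $\deg y_i=\deg z_i$, and $\varphi_{1,b}:R\to S^G_{1,b}$ is the $\mathbb{C}$-algebra map $y_i\mapsto z_i$. $b^{-1}$ is the unique integer $0<b^{-1}<p$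 with $bb^{-1}\equiv1\pmod p$. *)

From HB Require Import structures.
From mathcomp Require Import all_boot all_order all_algebra.
From mathcomp Require Import complex.
From mathcomp Require Import Rstruct.
From mathcomp Require Import mpoly.
From Stdlib Require Reals.

Set Implicit Arguments.
Unset Strict Implicit.
Unset Printing Implicit Defensive.

Import GRing.Theory.
Local Open Scope ring_scope.

Definition CC : fieldType := complex Rdefinitions.R.

(* Exponent pairs (c, d) stand for monomials x1^c x2^d. *)
(* x1^c x2^d is invariant under x1 -> zeta x1, x2 -> zeta^b x2 *)
Definition invariant_mon (p b : nat) (m : nat * nat) : Prop :=
  (m.1 + b * m.2 = 0 %[mod p])%N.

Definition nonconst_mon (m : nat * nat) : Prop := m <> (0%N, 0%N).

Definition in_inv (p b : nat) (m : nat * nat) : Prop :=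
  invariant_mon p b m /\ nonconst_mon m /\
  ~ (exists m1 m2 : nat * nat,
        invariant_mon p b m1 /\ nonconst_mon m1 /\
        invariant_mon p b m2 /\ nonconst_mon m2 /\
        m = ((m1.1 + m2.1)%N, (m1.2 + m2.2)%N)).

Definition lex_gt (m m' : nat * nat) : bool :=
  (m'.1 < m.1)%N || ((m'.1 == m.1) && (m'.2 < m.2)%N).

Definition inv_enum (p b : nat) (z : seq (nat * nat)) : Prop :=
  sorted lex_gt z /\ (forall m, m \in z <-> in_inv p b m).

Definition mon2 (m : nat * nat) : {mpoly CC[2]} :=
  'X_(@Ordinal 2 0 isT) ^+ m.1 * 'X_(@Ordinal 2 1 isT) ^+ m.2.

Definition varphi (n : nat) (z : seq (nat * nat)) (f : {mpoly CC[n]})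
  : {mpoly CC[2]} :=
  f \mPo [tuple mon2 (nth (0%N, 0%N) z i) | i < n].

Definition in_ideal (T : comRingType) (gs : seq T) (f : T) : Prop :=
  exists cs : seq T, f = \sum_(i < size gs) cs`_i * gs`_i.

Definition Y (k : nat) : {mpoly CC[5]} := 'X_(@inord 4 k).

(* Write p - b^-1 = 2x + 3 and p - b = 2y + 3.  The product condition becomes
   p = 2xy + 3x + 3y + 4, b = 2xy + 3x + y + 1, alpha = x + 2, beta = y + 2, and
   the generators of the invariant ring are the exponents
   z = (p, 0), (2y + 3, 1), (y + 2, x + 2), (1, 2x + 3), (0, p).
   No z_i divides another, and every nonconstant invariant monomial x1^c x2^d is
   divisible by some z_i: inside the box c <= 2y + 2, d <= 2x + 2 the congruences
   c = (2y + 3) d and d = (2x + 3) c (mod p) force (c, d) = (y + 2, x + 2).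
   For the kernel, each binomial rewrites y^u to y^v with the same image and a
   smaller weight, so every monomial of R is congruent modulo the ideal to a
   standard one, whose support is {y0, y1}, {y1, y2}, {y2, y3} or {y3, y4}.
   Consecutive z_i, z_(i+1) have determinant p, so they are a basis of the
   lattice of invariant exponents; hence varphi is injective on standard
   monomials, and a polynomial supported on standard monomials lies in the
   kernel only if it is 0. *)

From HB Require Import structures.
From mathcomp Require Import all_boot all_order all_algebra.
From mathcomp Require Import mpoly.
From mathcomp Require Import zify.

Set Implicit Arguments.
Unset Strict Implicit.
Unset Printing Implicit Defensive.

Import GRing.Theory.

Section IdealMembership.
Local Open Scope ring_scope.
Variables (T : comNzRingType) (gs : seq T).

Lemma in_idealP f :
  in_ideal gs f <-> exists c : nat -> T, f = \sum_(i < size gs) c i * gs`_i.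
Proof.
split=> [[cs ->]|[c ->]]; first by exists (fun i => cs`_i).
by exists (mkseq c (size gs)); apply: eq_bigr => i _; rewrite nth_mkseq.
Qed.

Lemma in_ideal0 : in_ideal gs 0.
Proof. by apply/in_idealP; exists (fun=> 0); rewrite big1 // => i _; rewrite mul0r. Qed.

Lemma in_idealD f g : in_ideal gs f -> in_ideal gs g -> in_ideal gs (f + g).
Proof.
move=> /in_idealP[c ->] /in_idealP[d ->]; apply/in_idealP; exists (fun i => c i + d i).
by rewrite -big_split; apply: eq_bigr => i _; rewrite mulrDl.
Qed.

Lemma in_idealMl h f : in_ideal gs f -> in_ideal gs (h * f).
Proof.
move=> /in_idealP[c ->]; apply/in_idealP; exists (fun i => h * c i).
by rewrite mulr_sumr; apply: eq_bigr => i _; rewrite mulrA.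
Qed.

Lemma in_ideal_mem g : g \in gs -> in_ideal gs g.
Proof.
move=> gs_g; have lt_g : (index g gs < size gs)%N by rewrite index_mem.
apply/in_idealP; exists (fun i => (i == index g gs)%:R).
rewrite (bigD1 (Ordinal lt_g)) //= eqxx mul1r nth_index //.
by rewrite big1 ?addr0 // => i /negbTE; rewrite -val_eqE => ->; rewrite mul0r.
Qed.

End IdealMembership.

Lemma lep2m n (i j : 'I_n) (r : 'X_{1..n}) :
  i != j -> (U_(i) + U_(j) <= r)%MM = (0 < r i) && (0 < r j).
Proof.
move=> ne_ij; apply/mnm_lepP/andP => [le_r | [r_i r_j] k].
  have := le_r i; have := le_r j.
  by rewrite !mnmDE !mnm1E !eqxx (negbTE ne_ij) eq_sym (negbTE ne_ij); split; lia.
rewrite mnmDE !mnm1E; case: eqP => [<-|_]; first by rewrite eq_sym (negbTE ne_ij).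
by case: eqP => [<-|_].
Qed.

Definition xi1 : 'I_2 := @Ordinal 2 0 isT.
Definition xi2 : 'I_2 := @Ordinal 2 1 isT.

Definition mexp2 (m : nat * nat) : 'X_{1..2} := (U_(xi1) *+ m.1 + U_(xi2) *+ m.2)%MM.

Lemma mon2E m : mon2 m = 'X_[mexp2 m].
Proof. by rewrite /mon2 /mexp2 mpolyXD !mpolyXn. Qed.

Lemma mexp2_inj : injective mexp2.
Proof.
move=> [a b] [c d] /mnmP eq_m; have := eq_m xi1; have := eq_m xi2.
by rewrite !mnmDE !mulmnE !mnm1E /= => ? ?; congr pair; lia.
Qed.

Section MonomialMap.
Variables (n : nat) (z : seq (nat * nat)).

HB.instance Definition _ :=
  GRing.RMorphism.copy (varphi z) (comp_mpoly [tuple mon2 (nth (0, 0) z i) | i < n]).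

Definition varphi_exp (e : 'X_{1..n}) : nat * nat :=
  (\sum_(i < n) e i * (nth (0, 0) z i).1, \sum_(i < n) e i * (nth (0, 0) z i).2).

Lemma varphiX e : varphi z 'X_[e] = mon2 (varphi_exp e).
Proof.
rewrite /varphi comp_mpolyX mon2E.
under eq_bigr => i _ do rewrite tnth_mktuple mon2E.
rewrite mprodXnE; congr mpolyX; apply/mnmP => j.
rewrite mnm_sumE mnmDE !mulmnE !mnm1E.
under eq_bigr => i _ do rewrite mulmnE mnmDE !mulmnE !mnm1E.
rewrite !big_distrr -big_split; apply: eq_bigr => i _.
by rewrite mulnDl -!mulnA; congr (_ * _ + _ * _); apply: mulnC.
Qed.

End MonomialMap.

Section BinomialKernel.
Local Open Scope ring_scope.
Variables (n : nat) (z : seq (nat * nat)) (B : seq ('X_{1..n} * 'X_{1..n})).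
Variable w : 'X_{1..n} -> nat.

Definition mbinom (t : 'X_{1..n} * 'X_{1..n}) : {mpoly CC[n]} := 'X_[t.2] - 'X_[t.1].

Definition standard (r : 'X_{1..n}) := all (fun t => ~~ (t.1 <= r)%MM) B.

Local Notation gens := (map mbinom B).

Hypothesis B_fibre : {in B, forall t, varphi_exp z t.1 = varphi_exp z t.2}.
Hypothesis wD : {morph w : e e' / (e + e')%MM >-> (e + e')%N}.
Hypothesis B_decr : {in B, forall t, w t.2 < w t.1}%N.
Hypothesis standard_inj : {in standard &, injective (varphi_exp z)}.

Lemma varphi_mbinom t : t \in B -> varphi z (mbinom t) = 0.
Proof. by move=> Bt; rewrite raddfB /= !varphiX B_fibre // subrr. Qed.

Lemma varphi_in_ideal f : in_ideal gens f -> varphi z f = 0.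
Proof.
move=> /in_idealP[c ->]; rewrite rmorph_sum big1 // => i _.
have lt_i : (i < size B)%N by rewrite -(size_map mbinom).
by rewrite rmorphM /= (nth_map (0, 0)%MM) // varphi_mbinom ?mulr0 // mem_nth.
Qed.

Lemma reduce_to_standard e : exists2 r, standard r & in_ideal gens ('X_[e] - 'X_[r]).
Proof.
elim: {e}(w e).+1 {-2}e (ltnSn (w e)) => // N IH e lt_e.
have [std_e|/allPn[t Bt /negbNE le_t]] := boolP (standard e).
  by exists e; rewrite // subrr; apply: in_ideal0.
move: (e - t.1)%MM (submK le_t) => e' def_e.
have [|r std_r ideal_r] := IH (e' + t.2)%MM.
  move: lt_e (B_decr Bt); rewrite -def_e !wD => lt_e lt_t.
  by rewrite -ltnS; apply: leq_trans lt_e; rewrite ltnS ltn_add2l.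
exists r => //; rewrite -(subrK 'X_[e' + t.2] 'X_[e]) -addrA.
apply: in_idealD ideal_r.
rewrite -def_e !mpolyXD -mulrBr -opprB -mulN1r mulrA.
exact/in_idealMl/in_ideal_mem/map_f.
Qed.

Lemma standard_form f :
  exists2 g, (forall m, ~~ standard m -> g@_m = 0) & in_ideal gens (f - g).
Proof.
elim/mpolyind: f => [|c m f _ _ [g g_std ideal_g]].
  by exists 0 => [m _|]; rewrite ?mcoeff0 // subrr; apply: in_ideal0.
have [r std_r ideal_r] := reduce_to_standard m.
exists (c *: 'X_[r] + g) => [m' nstd_m'|].
  rewrite mcoeffD mcoeffZ mcoeffX g_std //.
  by case: eqP nstd_m' => [<-|_]; rewrite ?std_r ?mulr0 ?addr0.
have -> : c *: 'X_[m] + f - (c *: 'X_[r] + g) = c%:MP * ('X_[m] - 'X_[r]) + (f - g).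
  by rewrite mul_mpolyC scalerBr opprD addrACA.
exact/in_idealD/ideal_g/in_idealMl.
Qed.

Lemma mcoeff_varphi_standard g m :
    (forall m', ~~ standard m' -> g@_m' = 0) -> standard m ->
  (varphi z g)@_(mexp2 (varphi_exp z m)) = g@_m.
Proof.
move=> g_std std_m; rewrite /varphi comp_mpolyEX raddf_sum /=.
rewrite [g in RHS]mpolyE raddf_sum /=; apply: eq_big_seq => m' supp_m'.
have std_m' : standard m'.
  by apply: contraLR supp_m' => /g_std; rewrite mcoeff_msupp negbK => /eqP.
rewrite -/(varphi z _) varphiX mon2E !mcoeffZ !mcoeffX (inj_eq mexp2_inj).
suff -> : (varphi_exp z m' == varphi_exp z m) = (m' == m) by [].
by apply/eqP/eqP => [/(standard_inj std_m' std_m)|->].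
Qed.

Lemma kernel_varphi f : varphi z f = 0 <-> in_ideal gens f.
Proof.
split; last exact: varphi_in_ideal.
move=> varphi_f; have [g g_std ideal_g] := standard_form f.
suff g0 : g = 0 by rewrite g0 subr0 in ideal_g.
apply/mpolyP => m; rewrite mcoeff0.
have [std_m|/g_std//] := boolP (standard m).
rewrite -mcoeff_varphi_standard //.
have := varphi_in_ideal ideal_g; rewrite raddfB /= varphi_f sub0r => /eqP.
by rewrite oppr_eq0 => /eqP->; rewrite mcoeff0.
Qed.

End BinomialKernel.

Arguments mbinom {n} t.

Definition mon_dvd (m m' : nat * nat) := (m.1 <= m'.1) && (m.2 <= m'.2).

Section MinimalGenerators.
Variables p b : nat.

Lemma invariant_monP m : invariant_mon p b m <-> p %| m.1 + b * m.2.
Proof. by rewrite /invariant_mon mod0n; split => /eqP. Qed.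

Lemma invariant_mon_sub m m' : mon_dvd m' m ->
  invariant_mon p b m' -> invariant_mon p b m -> invariant_mon p b (m.1 - m'.1, m.2 - m'.2).
Proof.
case: m m' => [c d] [c' d'] /andP[/= le_c le_d] /invariant_monP inv' /invariant_monP inv.
have le_bd : b * d' <= b * d by rewrite leq_mul2l le_d orbT.
apply/invariant_monP; rewrite /= mulnBr.
have -> : c - c' + (b * d - b * d') = c + b * d - (c' + b * d') by lia.
exact: dvdn_sub.
Qed.

Lemma in_invP (z : seq (nat * nat)) :
    {in z, forall m, invariant_mon p b m /\ nonconst_mon m} ->
    {in z &, forall m m', mon_dvd m m' -> m = m'} ->
    (forall m, invariant_mon p b m -> nonconst_mon m ->
       exists2 m', m' \in z & mon_dvd m' m) ->
  forall m, m \in z <-> in_inv p b m.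
Proof.
move=> z_gen z_antichain z_cover [c d]; split=> [z_m|[inv_m [nc_m irr_m]]].
  have [inv_m nc_m] := z_gen _ z_m; split=> //; split=> //.
  case=> [[c1 d1] [[c2 d2] [inv1 [nc1 [_ [nc2 /= [def_c def_d]]]]]]].
  have [[c' d'] z_m' /andP[/= le_c le_d]] := z_cover _ inv1 nc1.
  have [eq_c eq_d] : (c', d') = (c, d).
    by apply: z_antichain; rewrite // /mon_dvd /=; lia.
  by apply: nc2; congr pair; lia.
have [[c' d'] z_m' /andP[/= le_c le_d]] := z_cover _ inv_m nc_m.
have [eq_m' | ne_m'] := eqVneq (c', d') (c, d); first by rewrite -eq_m'.
have [inv_m' nc_m'] := z_gen _ z_m'.
case: irr_m; exists (c', d'), (c - c', d - d')%N.
do 3!split=> //.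
  by apply: (@invariant_mon_sub (c, d) (c', d')); rewrite // /mon_dvd le_c le_d.
split; last by congr pair => /=; lia.
by case=> e_c e_d; move: ne_m'; rewrite xpair_eqE; lia.
Qed.

End MinimalGenerators.

Local Notation yv i := (@inord 4 i).

Lemma inord_eq5 i j : i < 5 -> j < 5 -> (yv i == yv j) = (i == j).
Proof. by move=> lt_i lt_j; rewrite -val_eqE /= !inordK. Qed.

Lemma sum_ord5 (F : 'I_5 -> nat) :
  \sum_(i < 5) F i = F (yv 0) + F (yv 1) + F (yv 2) + F (yv 3) + F (yv 4).
Proof.
rewrite !big_ord_recr big_ord0 /=.
by congr (_ + _ + _ + _ + _); congr F; apply: val_inj; rewrite /= inordK.
Qed.

Section Family.
Variables x y : nat.
Local Notation p := (2 * x * y + 3 * x + 3 * y + 4).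
Local Notation b := (2 * x * y + 3 * x + y + 1).

Definition zgens : seq (nat * nat) :=
  [:: (p, 0); (2 * y + 3, 1); (y.+2, x.+2); (1, 2 * x + 3); (0, p)].

Lemma interior_quotients c d : c < p -> d < p -> p %| c + b * d ->
  exists A B, (2 * y + 3) * d = A * p + c /\ (2 * x + 3) * c = B * p + d.
Proof.
rewrite /dvdn => lt_c lt_d /eqP p_dvd.
have c_mod : c = (2 * y + 3) * d %[mod p].
  rewrite -(modnMDl d c) (_ : d * p + c = c + b * d + (2 * y + 3) * d); last by lia.
  by rewrite -modnDml p_dvd.
have d_mod : d = (2 * x + 3) * c %[mod p].
  rewrite -modnMmr c_mod modnMmr mulnA.
  by rewrite (_ : _ * d = (2 * d) * p + d) ?modnMDl //; lia.
exists ((2 * y + 3) * d %/ p), ((2 * x + 3) * c %/ p).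
split; first by rewrite {1}(divn_eq ((2 * y + 3) * d) p) -c_mod modn_small.
by rewrite {1}(divn_eq ((2 * x + 3) * c) p) -d_mod modn_small.
Qed.

Lemma interior_solution c d A B : 0 < c <= 2 * y + 2 -> 0 < d <= 2 * x + 2 ->
    (2 * y + 3) * d = A * p + c -> (2 * x + 3) * c = B * p + d ->
  (c, d) = (y.+2, x.+2).
Proof.
move=> /andP[c_gt0 c_le] /andP[d_gt0 d_le] F1 F2; have p_gt0 : 0 < p by lia.
(* Solve the 2 x 2 system: its determinant (2x + 3)(2y + 3) - 1 is 2p. *)
have E1 : 2 * c = (2 * y + 3) * B + A.
  apply/eqP; rewrite -(eqn_pmul2r p_gt0); apply/eqP.
  by have := congr1 (muln (2 * y + 3)) F2; lia.
have E2 : 2 * d = B + (2 * x + 3) * A.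
  apply/eqP; rewrite -(eqn_pmul2r p_gt0); apply/eqP.
  by have := congr1 (muln (2 * x + 3)) F1; lia.
have B1 : B = 1.
  have : (2 * y + 3) * B < (2 * y + 3) * 2 by lia.
  rewrite ltn_pmul2l ?addn_gt0 ?orbT // => B_lt2.
  case: B B_lt2 F2 {E1 E2 F1} => [|[|]] //= _ F2.
  by have := leq_pmulr (2 * x + 3) c_gt0; lia.
have A1 : A = 1.
  have : (2 * x + 3) * A < (2 * x + 3) * 2 by lia.
  rewrite ltn_pmul2l ?addn_gt0 ?orbT // => A_lt2.
  by case: A A_lt2 E2 {E1 F1 F2} => [|[|]] //=; lia.
by congr pair; lia.
Qed.

Lemma zgens_cover : prime p -> forall m, invariant_mon p b m -> nonconst_mon m ->
  exists2 m', m' \in zgens & mon_dvd m' m.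
Proof.
move=> p_prime [c d] /invariant_monP /= p_dvd nc_m.
have [d0 | d_gt0] := posnP d.
  exists (p, 0); rewrite ?mem_head // /mon_dvd /= andbT.
  have c_gt0 : 0 < c by case: posnP nc_m => // c0; rewrite c0 d0.
  by rewrite d0 muln0 addn0 in p_dvd; apply: dvdn_leq.
have [c0 | c_gt0] := posnP c.
  exists (0, p); rewrite ?inE ?eqxx ?orbT // /mon_dvd /=.
  move: p_dvd; rewrite c0 add0n Euclid_dvdM // => /orP[/dvdn_leq | /dvdn_leq -> //].
  by rewrite addn1 => /(_ isT); lia.
have [c_ge | c_le] := leqP (2 * y + 3) c.
  by exists (2 * y + 3, 1); rewrite ?inE ?eqxx ?orbT // /mon_dvd /=; lia.
have [d_ge | d_le] := leqP (2 * x + 3) d.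
  by exists (1, 2 * x + 3); rewrite ?inE ?eqxx ?orbT // /mon_dvd /=; lia.
exists (y.+2, x.+2); first by rewrite !inE eqxx !orbT.
have [||A [B [F1 F2]]] := @interior_quotients c d _ _ p_dvd; try lia.
by rewrite (interior_solution _ _ F1 F2) ?leqnn //; apply/andP; split; lia.
Qed.

Lemma zgens_antichain : {in zgens &, forall m m', mon_dvd m m' -> m = m'}.
Proof.
move=> m m' z_m z_m' dvd_m; apply/eqP; move: dvd_m; apply/implyP.
move: m m' z_m z_m'; apply/allrelP.
rewrite /allrel /mon_dvd /= !xpair_eqE !eqxx !implybT /=.
by repeat (apply/andP; split); lia.
Qed.

Lemma zgens_invariant :
  {in zgens, forall m, invariant_mon p b m /\ nonconst_mon m}.
Proof.
have zgens_dvd : all (fun m => p %| m.1 + b * m.2) zgens.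
  rewrite /= andbT; apply/and5P; split; apply/dvdnP.
  - by exists 1; lia.
  - by exists 1; lia.
  - by exists x.+1; lia.
  - by exists (2 * x + 1); lia.
  - by exists b; lia.
move=> m z_m; split; first exact/invariant_monP/(allP zgens_dvd).
by move=> m0; move: z_m; rewrite m0 !inE !xpair_eqE /=; lia.
Qed.

Lemma zgens_inv_enum : prime p -> inv_enum p b zgens.
Proof.
move=> p_prime; split; first by rewrite /= /lex_gt /=; lia.
exact: in_invP zgens_invariant zgens_antichain (zgens_cover p_prime).
Qed.

Definition zrels : seq ('X_{1..5} * 'X_{1..5}) :=
  [:: (U_(yv 1) + U_(yv 3), U_(yv 2) *+ 2);
      (U_(yv 0) + U_(yv 3), U_(yv 1) *+ x.+1 + U_(yv 2));
      (U_(yv 2) + U_(yv 4), U_(yv 3) *+ y.+2);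
      (U_(yv 0) + U_(yv 2), U_(yv 1) *+ x.+2);
      (U_(yv 1) + U_(yv 4), U_(yv 2) + U_(yv 3) *+ y.+1);
      (U_(yv 0) + U_(yv 4), U_(yv 1) *+ x.+1 + U_(yv 3) *+ y.+1)]%MM.

Lemma map_mbinom_zrels : map mbinom zrels =
  [:: Y 2 ^+ 2 - Y 1 * Y 3;
      Y 1 ^+ (x.+2).-1 * Y 2 - Y 0 * Y 3;
      Y 3 ^+ y.+2 - Y 2 * Y 4;
      Y 1 ^+ x.+2 - Y 0 * Y 2;
      Y 2 * Y 3 ^+ (y.+2).-1 - Y 1 * Y 4;
      Y 1 ^+ (x.+2).-1 * Y 3 ^+ (y.+2).-1 - Y 0 * Y 4]%R.
Proof. by rewrite /Y !mpolyXn -!mpolyXD. Qed.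

Lemma varphi_exp_zgens e : varphi_exp zgens e =
  (p * e (yv 0) + (2 * y + 3) * e (yv 1) + y.+2 * e (yv 2) + e (yv 3),
   e (yv 1) + x.+2 * e (yv 2) + (2 * x + 3) * e (yv 3) + p * e (yv 4)).
Proof. by rewrite /varphi_exp !sum_ord5 !inordK //=; congr pair; lia. Qed.

Lemma zrels_fibre :
  {in zrels, forall t, varphi_exp zgens t.1 = varphi_exp zgens t.2}.
Proof.
suff /allP fibre :
    all (fun t => varphi_exp zgens t.1 == varphi_exp zgens t.2) zrels.
  by move=> t /fibre/eqP.
cbn [all zrels fst snd].
rewrite !varphi_exp_zgens !mnmDE !mulmnE !mnm1E !inord_eq5 //= !xpair_eqE.
by repeat (apply/andP; split); lia.
Qed.

Definition zweight (e : 'X_{1..5}) :=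
  (x + y + 5) * (e (yv 0) + e (yv 4)) + e (yv 1) + e (yv 3).

Lemma zweightD : {morph zweight : e e' / (e + e')%MM >-> e + e'}.
Proof. by move=> e e'; rewrite /zweight !mnmDE; lia. Qed.

Lemma zrels_decr : {in zrels, forall t, zweight t.2 < zweight t.1}.
Proof.
apply/allP; cbn [all zrels fst snd].
by rewrite /zweight !mnmDE !mulmnE !mnm1E !inord_eq5 //=; lia.
Qed.

Lemma standard_zrels_sector r : standard zrels r ->
  (r (yv 2) = 0 /\ r (yv 3) = 0 /\ r (yv 4) = 0) \/
  (r (yv 0) = 0 /\ r (yv 3) = 0 /\ r (yv 4) = 0) \/
  (r (yv 0) = 0 /\ r (yv 1) = 0 /\ r (yv 4) = 0) \/
  (r (yv 0) = 0 /\ r (yv 1) = 0 /\ r (yv 2) = 0).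
Proof.
by rewrite /standard; cbn [all zrels fst]; rewrite !lep2m ?inord_eq5 //; lia.
Qed.

Lemma standard_zrels_inj : {in standard zrels &, injective (varphi_exp zgens)}.
Proof.
move=> r s /standard_zrels_sector sec_r /standard_zrels_sector sec_s.
rewrite !varphi_exp_zgens => -[e1 e2].
have p_gt0 : 0 < p by lia.
(* e3, e4, e5 compare the functionals det(z_k, -) / p for k = 1, 2, 3, which are
   integral on the image of varphi_exp; on a sector they determine the exponent. *)
have e3 : r (yv 0) + (s (yv 2) + 2 * s (yv 3) + (2 * y + 3) * s (yv 4)) =
          s (yv 0) + (r (yv 2) + 2 * r (yv 3) + (2 * y + 3) * r (yv 4)).
  apply/eqP; rewrite -(eqn_pmul2l p_gt0); apply/eqP.
  by have := congr1 (muln (2 * y + 3)) e2; lia.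
have e4 : x.+2 * r (yv 0) + r (yv 1) + (s (yv 3) + y.+2 * s (yv 4)) =
          x.+2 * s (yv 0) + s (yv 1) + (r (yv 3) + y.+2 * r (yv 4)).
  apply/eqP; rewrite -(eqn_pmul2l p_gt0); apply/eqP.
  by have := congr1 (muln y.+2) e2; have := congr1 (muln x.+2) e1; lia.
have e5 : (2 * x + 3) * r (yv 0) + 2 * r (yv 1) + r (yv 2) + s (yv 4) =
          (2 * x + 3) * s (yv 0) + 2 * s (yv 1) + s (yv 2) + r (yv 4).
  apply/eqP; rewrite -(eqn_pmul2l p_gt0); apply/eqP.
  by have := congr1 (muln (2 * x + 3)) e1; lia.
have [q0 [q1 [q2 [q3 q4]]]] : r (yv 0) = s (yv 0) /\ r (yv 1) = s (yv 1) /\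
    r (yv 2) = s (yv 2) /\ r (yv 3) = s (yv 3) /\ r (yv 4) = s (yv 4).
  move: e1 e2 e3 e4 e5 {p_gt0}.
  by case: sec_r => [[-> [-> ->]]|[[-> [-> ->]]|[[-> [-> ->]]|[-> [-> ->]]]]];
    case: sec_s => [[-> [-> ->]]|[[-> [-> ->]]|[[-> [-> ->]]|[-> [-> ->]]]]]; lia.
apply/mnmP => i; rewrite -(inord_val i).
by case: i => [[|[|[|[|[|//]]]]] ?].
Qed.

End Family.

Lemma product_param p b binv : b < p -> binv < p ->
    (p - b) * (p - binv) = 2 * p + 1 ->
  exists x y, [/\ p = 2 * x * y + 3 * x + 3 * y + 4, b = 2 * x * y + 3 * x + y + 1,
                  (p - binv + 1) %/ 2 = x.+2 & (p - b + 1) %/ 2 = y.+2].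
Proof.
move=> lt_b lt_binv prod.
have /andP[odd_u odd_v] : odd (p - b) && odd (p - binv).
  by rewrite -oddM prod addn1 /= oddM.
move: (odd_double_half (p - b)) (odd_double_half (p - binv)).
rewrite odd_u odd_v -!muln2.
case: (p - b)./2 => [|y] def_u; case: (p - binv)./2 => [|x] def_v; try lia.
by exists x, y; split; lia.
Qed.

Local Open Scope ring_scope.

Theorem proposition5p5 (p b : nat) :
  prime p ->
  (2 * b > p.-1)%N -> (b < p)%N ->
  forall binv : nat, (0 < binv < p)%N -> (b * binv = 1 %[mod p])%N ->
  ((p - b) * (p - binv) = 2 * p + 1)%N ->
  let alpha := ((p - binv + 1) %/ 2)%N in
  let beta := ((p - b + 1) %/ 2)%N in
  exists z : seq (nat * nat),
    size z = 5%N /\ inv_enum p b z /\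
    forall f : {mpoly CC[5]},
      varphi z f = 0 <->
      in_ideal
        [:: Y 2 ^+ 2 - Y 1 * Y 3;
            Y 1 ^+ alpha.-1 * Y 2 - Y 0 * Y 3;
            Y 3 ^+ beta - Y 2 * Y 4;
            Y 1 ^+ alpha - Y 0 * Y 2;
            Y 2 * Y 3 ^+ beta.-1 - Y 1 * Y 4;
            Y 1 ^+ alpha.-1 * Y 3 ^+ beta.-1 - Y 0 * Y 4] f.
Proof.
(* b * binv = 1 (mod p) and 2b > p - 1 follow from the product condition. *)
move=> p_prime _ lt_bp binv /andP[_ lt_binv] _ prod /=.
have [x [y [def_p def_b -> ->]]] := product_param lt_bp lt_binv prod.
subst p b; exists (zgens x y); split=> //; split; first exact: zgens_inv_enum.
have := kernel_varphi (@zrels_fibre x y) (zweightD x y) (@zrels_decr x y)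
  (@standard_zrels_inj x y).
by rewrite map_mbinom_zrels.
Qed.
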